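(* Let $v:\mathbb{R}/\mathbb{Z}\to\mathbb{R}$ be real analytic, $\alpha\in\mathbb{R}\setminus\mathbb{Q}$, $x\in\mathbb{R}$, $E\in\mathbb{R}$, and $A=A^{(E-v)}$. There is a constant $C>0$, independent of $k$, $\epsilon$, $x$, $E$ and $v$, such that for every integer $k\ge1$: if $\epsilon>0$ satisfies $\det P_{(k)}=\frac{1}{4\epsilon^2}$, then $$C^{-1}<\frac{\psi(m^+(E+i\epsilon))}{2\epsilon\|P_{(k)}\|}<C.$$
   Context: $A^{(E-v)}(y)=\begin{pmatrix}E-v(y)&-1\\1&0\end{pmatrix}$, $A_n(y)=A(y+(n-1)\alpha)\cdots A(y)$ for $n\ge1$, and $P_{(k)}=\sum_{j=1}^k A_{2j-1}(x+\alpha)^*A_{2j-1}(x+\alpha)$ (a positive self-adjoint $2\times2$ matrix). $H=H_{v,\alpha,x}$ is the operator $(Hu)_n=u_{n+1}+u_{n-1}+v(x+n\alpha)u_n$ on $\ell^2(\mathbb{Z})$. For $z=E+i\epsilon$, $\epsilon>0$, let $u^+$ be a nonzero solution of $Hu^+=zu^+$ (as a formal difference equation) which is square summable at $+\infty$ (unique up to normalization), and $m^+(z)=-u^+_1/u^+_0$; it lies in the upper half plane $\mathbb{H}$. For $t\in\mathbb{R}$ let $R_t=\begin{pmatrix}\cos2\pi t&-\sin2\pi t\\\sin2\pi t&\cos2\pi t\end{pmatrix}$, acting on $\mathbb{H}$ by Möbius transformations $\begin{pmatrix}a&b\\c&d\end{pmatrix}\cdot z=\frac{az+b}{cz+d}$;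 for $z\in\mathbb{H}$ set $z_\beta=R_{-\beta/2\pi}\cdot z$ and $\psi(z)=\sup_\beta|z_\beta|$. *)

From Stdlib Require Import Reals ZArith QArith Qreals.
From Coquelicot Require Import Coquelicot.
Open Scope R_scope.

Record mat2 := M2 { m11 : R; m12 : R; m21 : R; m22 : R }.

Definition mmul (A B : mat2) : mat2 :=
  M2 (m11 A * m11 B + m12 A * m21 B) (m11 A * m12 B + m12 A * m22 B)
     (m21 A * m11 B + m22 A * m21 B) (m21 A * m12 B + m22 A * m22 B).
Definition madd (A B : mat2) : mat2 :=
  M2 (m11 A + m11 B) (m12 A + m12 B) (m21 A + m21 B) (m22 A + m22 B).
Definition mid : mat2 := M2 1 0 0 1.
Definition mzero : mat2 := M2 0 0 0 0.
(* adjoint of a real matrix = transpose *)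
Definition madj (A : mat2) : mat2 := M2 (m11 A) (m21 A) (m12 A) (m22 A).
Definition mdet (A : mat2) : R := m11 A * m22 A - m12 A * m21 A.

Definition opnorm (A : mat2) : Rbar :=
  Lub_Rbar (fun r => exists w1 w2 : R, w1 ^ 2 + w2 ^ 2 = 1 /\
     r = sqrt ((m11 A * w1 + m12 A * w2) ^ 2 + (m21 A * w1 + m22 A * w2) ^ 2)).

Definition Acoc (v : R -> R) (E y : R) : mat2 := M2 (E - v y) (-1) 1 0.

Fixpoint An (v : R -> R) (alpha E : R) (n : nat) (y : R) : mat2 :=
  match n with
  | O => mid
  | S n' => mmul (Acoc v E (y + INR n' * alpha)) (An v alpha E n' y)
  end.

Fixpoint Pk (v : R -> R) (alpha x E : R) (k : nat) : mat2 :=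
  match k with
  | O => mzero
  | S k' => madd (Pk v alpha x E k')
      (mmul (madj (An v alpha E (2 * k' + 1) (x + alpha)))
            (An v alpha E (2 * k' + 1) (x + alpha)))
  end.

Definition irrational (a : R) : Prop := forall q : Q, a <> Q2R q.

(* v : R/Z -> R, represented as a 1-periodic function on R *)
Definition one_periodic (v : R -> R) : Prop := forall y, v (y + 1) = v y.

Definition real_analytic (v : R -> R) : Prop :=
  forall y0 : R, exists (r : R) (a : nat -> R), 0 < r /\
    forall y, Rabs (y - y0) < r -> is_pseries a (y - y0) (v y).

Local Open Scope C_scope.

(* u solves H_{v,alpha,x} u = z u as a formal difference equation on Z *)
Definition solves (v : R -> R) (alpha x : R) (z : C) (u : Z -> C) : Prop :=
  forall n : Z,
    u (n + 1)%Z + u (n - 1)%Z + RtoC (v (x + IZR n * alpha)%R) * u n = z * u n.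

Definition nonzero_seq (u : Z -> C) : Prop := exists n : Z, u n <> 0.

Definition l2_at_plus_infty (u : Z -> C) : Prop :=
  ex_series (fun n : nat => (Cmod (u (Z.of_nat n)) ^ 2)%R).

(* m^+ from a Weyl solution u^+ *)
Definition m_of (u : Z -> C) : C := - (u 1%Z / u 0%Z).

Definition Rot (t : R) : mat2 :=
  M2 (cos (2 * PI * t)) (- sin (2 * PI * t)) (sin (2 * PI * t)) (cos (2 * PI * t)).

Definition mobius (M : mat2) (z : C) : C :=
  (RtoC (m11 M) * z + RtoC (m12 M)) / (RtoC (m21 M) * z + RtoC (m22 M)).

Definition z_beta (z : C) (beta : R) : C := mobius (Rot (- beta / (2 * PI))) z.

Definition psi (z : C) : Rbar :=
  Lub_Rbar (fun r => exists beta : R, r = Cmod (z_beta z beta)).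

(* Write [u_n = p_n + i q_n] and let [a], [b] solve the real equation [H y = E y] with
   [(a_0, a_1) = (0, 1)] and [(b_0, b_1) = (1, 0)]; [P_(k)] is the Gram matrix of the
   vectors [(a_n, b_n)], [1 <= n <= 2k]. Green's identity and square summability give
   [eps * sum_n |u_n|^2 <= t := Im(u_0 conj u_1)]. By variation of constants, [u] differs
   from the free solution [u_1 a + u_0 b] by a Duhamel sum whose squared norm is, by
   Cauchy-Schwarz and the Lagrange identity, at most [2 eps^2 det P * sum_n |u_n|^2]; since
   [det P = 1 / (4 eps^2)] this yields [eps <P w, w> <= 3 t] for [w = (u_1, u_0)].
   Finally [psi(m^+)] is comparable to [|w|^2 / t] and [||P||] to [tr P], and two
   inequalities between the quadratic forms of [P] and [adj P] compare these quantities. *)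
From Stdlib Require Import Reals ZArith QArith Qreals Lra Lia Psatz.
From Coquelicot Require Import Coquelicot.
Open Scope R_scope.

Fixpoint fsum (f : nat -> R) (n : nat) : R :=
  match n with O => 0 | S n' => fsum f n' + f n' end.

Lemma fsum_ext f g n : (forall i, (i < n)%nat -> f i = g i) -> fsum f n = fsum g n.
Proof.
  induction n as [|n IH]; intros H; simpl; [reflexivity|].
  rewrite IH, (H n); [reflexivity | lia | intros; apply H; lia].
Qed.

Lemma fsum_plus f g n : fsum (fun i => f i + g i) n = fsum f n + fsum g n.
Proof. induction n as [|n IH]; simpl; [ring|]. rewrite IH; ring. Qed.

Lemma fsum_scal_l c f n : fsum (fun i => c * f i) n = c * fsum f n.
Proof. induction n as [|n IH]; simpl; [ring|]. rewrite IH; ring. Qed.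

Lemma fsum_scal_r c f n : fsum (fun i => f i * c) n = fsum f n * c.
Proof. induction n as [|n IH]; simpl; [ring|]. rewrite IH; ring. Qed.

Lemma fsum_nonneg f n : (forall i, 0 <= f i) -> 0 <= fsum f n.
Proof. intros H; induction n as [|n IH]; simpl; [lra|]. specialize (H n); lra. Qed.

Lemma fsum_le f g n : (forall i, (i < n)%nat -> f i <= g i) -> fsum f n <= fsum g n.
Proof.
  induction n as [|n IH]; intros H; simpl; [lra|].
  assert (fsum f n <= fsum g n) by (apply IH; intros; apply H; lia).
  specialize (H n ltac:(lia)); lra.
Qed.

Lemma fsum_le_mono f n m : (forall i, 0 <= f i) -> (n <= m)%nat -> fsum f n <= fsum f m.
Proof. intros H Hnm; induction Hnm; simpl; [lra|]. specialize (H m); lra. Qed.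

Lemma fsum_ge_term f n i : (forall j, 0 <= f j) -> (i < n)%nat -> f i <= fsum f n.
Proof.
  intros H Hi. apply Rle_trans with (fsum f (S i)).
  - simpl. pose proof (fsum_nonneg f i H); lra.
  - apply fsum_le_mono; [exact H | lia].
Qed.

Lemma fsum_prod x y M N :
  fsum (fun i => fsum (fun j => x i * y j) N) M = fsum x M * fsum y N.
Proof. induction M as [|M IH]; simpl; [ring|]. rewrite IH, fsum_scal_l; ring. Qed.

Lemma cauchy_schwarz_fsum f g n :
  fsum (fun i => f i * g i) n ^ 2 <= fsum (fun i => f i ^ 2) n * fsum (fun i => g i ^ 2) n.
Proof.
  induction n as [|n IH]; cbn [fsum]; [lra|].
  set (s := fsum (fun i => f i * g i) n) in *.
  set (F := fsum (fun i => f i ^ 2) n) in *. set (G := fsum (fun i => g i ^ 2) n) in *.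
  assert (HF : 0 <= F) by (apply fsum_nonneg; intros; apply pow2_ge_0).
  assert (HG : 0 <= G) by (apply fsum_nonneg; intros; apply pow2_ge_0).
  (* the cross term: [2 s f g <= F g^2 + G f^2], from [s^2 <= F G] and AM-GM *)
  assert (Hcross : 2 * s * f n * g n <= F * g n ^ 2 + G * f n ^ 2).
  { assert (Hsq : Rsqr (2 * s * f n * g n) <= Rsqr (F * g n ^ 2 + G * f n ^ 2)).
    { unfold Rsqr. pose proof (pow2_ge_0 (F * g n ^ 2 - G * f n ^ 2)).
      assert (s ^ 2 * (f n ^ 2 * g n ^ 2) <= F * G * (f n ^ 2 * g n ^ 2))
        by (apply Rmult_le_compat_r; [nra | exact IH]).
      nra. }
    apply Rsqr_le_abs_0 in Hsq.
    rewrite (Rabs_pos_eq (F * g n ^ 2 + G * f n ^ 2)) in Hsq by nra.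
    pose proof (Rle_abs (2 * s * f n * g n)); lra. }
  replace ((s + f n * g n) ^ 2) with (s ^ 2 + 2 * s * f n * g n + f n ^ 2 * g n ^ 2) by ring.
  replace ((F + f n ^ 2) * (G + g n ^ 2))
    with (F * G + (F * g n ^ 2 + G * f n ^ 2) + f n ^ 2 * g n ^ 2) by ring.
  lra.
Qed.

Lemma lagrange_identity_fsum x y N :
  fsum (fun i => fsum (fun j => (x i * y j - x j * y i) ^ 2) N) N =
  2 * (fsum (fun i => x i ^ 2) N * fsum (fun i => y i ^ 2) N
       - fsum (fun i => x i * y i) N ^ 2).
Proof.
  transitivity (fsum (fun i => fsum (fun j => x i ^ 2 * y j ^ 2) N
     + fsum (fun j => y i ^ 2 * x j ^ 2) N
     + fsum (fun j => (-2 * (x i * y i)) * (x j * y j)) N) N).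
  { apply fsum_ext; intros i _. rewrite <- !fsum_plus. apply fsum_ext; intros; ring. }
  rewrite !fsum_plus, !fsum_prod, fsum_scal_l. ring.
Qed.

Definition gram (a b : nat -> R) (N : nat) : R := fsum (fun i => a (S i) * b (S i)) N.

Definition gram_det (a b : nat -> R) (N : nat) : R :=
  gram a a N * gram b b N - gram a b N ^ 2.

Definition qform (A B C x y : R) : R := A * x ^ 2 + 2 * C * x * y + B * y ^ 2.

Lemma qform_gram a b N y1 y0 :
  qform (gram a a N) (gram b b N) (gram a b N) y1 y0
  = fsum (fun n => (y1 * a (S n) + y0 * b (S n)) ^ 2) N.
Proof.
  rewrite (fsum_ext _ (fun n => y1 ^ 2 * (a (S n) * a (S n))
      + (2 * y1 * y0 * (a (S n) * b (S n)) + y0 ^ 2 * (b (S n) * b (S n)))))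
    by (intros; ring).
  rewrite !fsum_plus, !fsum_scal_l. unfold qform, gram. ring.
Qed.

Definition rec_sol (c h y : nat -> R) : Prop :=
  forall n, y (S (S n)) = c n * y (S n) - y n + h n.

Lemma rec_sol_unique c h y z : rec_sol c h y -> rec_sol c h z ->
  y 0%nat = z 0%nat -> y 1%nat = z 1%nat -> forall n, y n = z n.
Proof.
  intros Hy Hz H0 H1.
  assert (H : forall n, y n = z n /\ y (S n) = z (S n)).
  { induction n as [|n [IH1 IH2]]; [auto|]. split; [exact IH2|].
    rewrite Hy, Hz, IH1, IH2; reflexivity. }
  intros n; apply H.
Qed.

Section Recurrence.
Variables (c a b : nat -> R).
Hypotheses (Ha : rec_sol c (fun _ => 0) a) (Hb : rec_sol c (fun _ => 0) b).
Hypotheses (Ha0 : a 0%nat = 0) (Ha1 : a 1%nat = 1) (Hb0 : b 0%nat = 1) (Hb1 : b 1%nat = 0).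

Lemma fundamental_wronskian n : a (S n) * b n - a n * b (S n) = 1.
Proof.
  induction n as [|n IH]; [rewrite Ha0, Ha1, Hb0, Hb1; ring|].
  rewrite Ha, Hb. lra.
Qed.

Definition kernel n j := a n * b j - a j * b n.

Definition duhamel (g : nat -> R) n := fsum (fun j => kernel n (S j) * g (S j)) n.

Lemma kernel_rec n j : kernel (S (S n)) j = c n * kernel (S n) j - kernel n j.
Proof. unfold kernel. rewrite Ha, Hb. ring. Qed.

Lemma duhamel_rec g : rec_sol c (fun n => g (S n)) (duhamel g).
Proof.
  intros n. unfold duhamel.
  rewrite (fsum_ext _ (fun j => c n * (kernel (S n) (S j) * g (S j))
                                + -1 * (kernel n (S j) * g (S j))))
    by (intros j _; rewrite kernel_rec; ring).
  rewrite fsum_plus, !fsum_scal_l. cbn [fsum].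
  assert (Hsub : kernel n (S n) = -1)
    by (unfold kernel; pose proof (fundamental_wronskian n); lra).
  assert (Hdiag : kernel n (S (S n)) = c n * kernel (S n) (S (S n)))
    by (pose proof (kernel_rec n (S (S n))) as K; unfold kernel in K at 1; lra).
  rewrite Hsub, Hdiag. ring.
Qed.

Lemma variation_of_constants g y : rec_sol c (fun n => g (S n)) y ->
  forall n, y n = y 1%nat * a n + y 0%nat * b n + duhamel g n.
Proof.
  intros Hy. apply (rec_sol_unique c (fun n => g (S n))); [exact Hy| | |].
  - intros n. rewrite Ha, Hb, duhamel_rec. ring.
  - rewrite Ha0, Hb0. unfold duhamel; simpl. ring.
  - rewrite Ha1, Hb1. unfold duhamel, kernel; simpl. ring.
Qed.

Lemma duhamel_sq_le g N :
  fsum (fun n => duhamel g (S n) ^ 2) N <=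
  2 * gram_det a b N * fsum (fun j => g (S j) ^ 2) N.
Proof.
  set (G := fsum (fun j => g (S j) ^ 2) N).
  assert (HG : 0 <= G) by (apply fsum_nonneg; intros; apply pow2_ge_0).
  apply Rle_trans with (fsum (fun n => fsum (fun j => kernel (S n) (S j) ^ 2) N * G) N).
  - apply fsum_le; intros n Hn. unfold duhamel.
    eapply Rle_trans; [apply cauchy_schwarz_fsum|].
    apply Rmult_le_compat; try (apply fsum_nonneg; intros; apply pow2_ge_0);
      apply fsum_le_mono; try lia; intros; apply pow2_ge_0.
  - right. rewrite fsum_scal_r. f_equal.
    rewrite (fsum_ext _ (fun i => fsum (fun j => (a (S i) * b (S j) - a (S j) * b (S i)) ^ 2) N))
      by (intros; reflexivity).
    rewrite lagrange_identity_fsum. unfold gram_det, gram.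
    rewrite (fsum_ext (fun i => a (S i) ^ 2) (fun i => a (S i) * a (S i))) by (intros; ring).
    rewrite (fsum_ext (fun i => b (S i) ^ 2) (fun i => b (S i) * b (S i))) by (intros; ring).
    ring.
Qed.

Variables (eps : R) (p q : nat -> R).
Hypotheses (Hp : rec_sol c (fun n => - eps * q (S n)) p)
           (Hq : rec_sol c (fun n => eps * p (S n)) q).

Definition mass N := fsum (fun n => p (S n) ^ 2 + q (S n) ^ 2) N.

Definition flux n := q (S n) * p n - p (S n) * q n.

Lemma green_identity N : eps * mass N = flux N - flux 0.
Proof.
  induction N as [|N IH]; unfold mass in *; cbn [fsum]; [unfold flux; ring|].
  rewrite Rmult_plus_distr_l, IH. unfold flux. rewrite Hp, Hq. ring.
Qed.

Lemma mass_le_wronskian N : 0 <= eps ->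
  is_lim_seq (fun n => p n ^ 2 + q n ^ 2) 0 ->
  eps * mass N <= p 1%nat * q 0%nat - q 1%nat * p 0%nat.
Proof.
  intros Heps Hdecay. apply Rnot_lt_le; intros Hlt.
  set (dl := eps * mass N - (p 1%nat * q 0%nat - q 1%nat * p 0%nat)).
  assert (Hdl : 0 < dl) by (unfold dl; lra).
  destruct (proj2 (is_lim_seq_spec _ _) Hdecay (mkposreal dl Hdl)) as [M0 HM0].
  simpl in HM0.
  set (M := (M0 + N)%nat).
  pose proof (HM0 M ltac:(unfold M; lia)) as HM.
  pose proof (HM0 (S M) ltac:(unfold M; lia)) as HSM.
  rewrite Rminus_0_r, Rabs_pos_eq in HM, HSM by nra.
  assert (Hflux : flux M <= (p (S M) ^ 2 + q (S M) ^ 2 + p M ^ 2 + q M ^ 2) / 2).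
  { unfold flux. pose proof (pow2_ge_0 (q (S M) - p M)).
    pose proof (pow2_ge_0 (p (S M) + q M)). lra. }
  assert (Hmono : mass N <= mass M)
    by (apply fsum_le_mono; [intros; nra | unfold M; lia]).
  pose proof (green_identity M) as G.
  assert (eps * mass N <= eps * mass M) by (apply Rmult_le_compat_l; lra).
  unfold flux at 2 in G. unfold dl in *. lra.
Qed.

Lemma free_mass_le N :
  qform (gram a a N) (gram b b N) (gram a b N) (p 1%nat) (p 0%nat)
  + qform (gram a a N) (gram b b N) (gram a b N) (q 1%nat) (q 0%nat)
  <= 2 * (1 + 2 * eps ^ 2 * gram_det a b N) * mass N.
Proof.
  set (hp n := p 1%nat * a n + p 0%nat * b n).
  set (hq n := q 1%nat * a n + q 0%nat * b n).
  assert (Hform : qform (gram a a N) (gram b b N) (gram a b N) (p 1%nat) (p 0%nat)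
      + qform (gram a a N) (gram b b N) (gram a b N) (q 1%nat) (q 0%nat)
      = fsum (fun n => hp (S n) ^ 2 + hq (S n) ^ 2) N)
    by (rewrite fsum_plus, !qform_gram; reflexivity).
  (* the deviation from the free solution is a Duhamel term of size [eps] *)
  assert (Hdev_p : forall n, p n - hp n = duhamel (fun j => - eps * q j) n)
    by (intros n; rewrite (variation_of_constants (fun j => - eps * q j) p Hp n); unfold hp; ring).
  assert (Hdev_q : forall n, q n - hq n = duhamel (fun j => eps * p j) n)
    by (intros n; rewrite (variation_of_constants (fun j => eps * p j) q Hq n); unfold hq; ring).
  assert (Hdev : fsum (fun n => (p (S n) - hp (S n)) ^ 2 + (q (S n) - hq (S n)) ^ 2) N
                 <= 2 * gram_det a b N * (eps ^ 2 * mass N)).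
  { rewrite fsum_plus.
    rewrite (fsum_ext _ _ _ (fun n _ => f_equal (fun r => r ^ 2) (Hdev_p (S n)))).
    rewrite (fsum_ext _ _ _ (fun n _ => f_equal (fun r => r ^ 2) (Hdev_q (S n)))).
    pose proof (duhamel_sq_le (fun j => - eps * q j) N) as Bp.
    pose proof (duhamel_sq_le (fun j => eps * p j) N) as Bq.
    replace (eps ^ 2 * mass N)
      with (fsum (fun j => (- eps * q (S j)) ^ 2) N + fsum (fun j => (eps * p (S j)) ^ 2) N).
    2:{ unfold mass. rewrite <- fsum_plus, <- fsum_scal_l. apply fsum_ext; intros; ring. }
    lra. }
  rewrite Hform.
  apply Rle_trans with (fsum (fun n => 2 * (p (S n) ^ 2 + q (S n) ^ 2)
      + 2 * ((p (S n) - hp (S n)) ^ 2 + (q (S n) - hq (S n)) ^ 2)) N).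
  - apply fsum_le; intros n _.
    pose proof (pow2_ge_0 (2 * p (S n) - hp (S n))).
    pose proof (pow2_ge_0 (2 * q (S n) - hq (S n))). lra.
  - rewrite fsum_plus, !fsum_scal_l. fold (mass N). lra.
Qed.

End Recurrence.

Section Cocycle.
Variables (v : R -> R) (alpha x E : R).

Definition pot_coef n := E - v (x + INR (S n) * alpha).

(* the second row of [A_n(x + alpha)] is [(a_n, b_n)] in the notation above *)
Definition fund1 n := m21 (An v alpha E n (x + alpha)).
Definition fund0 n := m22 (An v alpha E n (x + alpha)).

Lemma fund1_S n : fund1 (S n) = m11 (An v alpha E n (x + alpha)).
Proof. unfold fund1; simpl; ring. Qed.

Lemma fund0_S n : fund0 (S n) = m12 (An v alpha E n (x + alpha)).
Proof. unfold fund0; simpl; ring. Qed.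

Lemma pot_shift n : v (x + alpha + INR n * alpha) = v (x + INR (S n) * alpha).
Proof. f_equal; rewrite S_INR; ring. Qed.

Lemma fund1_rec : rec_sol pot_coef (fun _ => 0) fund1.
Proof.
  intros n. rewrite !fund1_S. unfold fund1, pot_coef.
  cbn [An mmul Acoc m11 m12 m21 m22]. rewrite pot_shift. ring.
Qed.

Lemma fund0_rec : rec_sol pot_coef (fun _ => 0) fund0.
Proof.
  intros n. rewrite !fund0_S. unfold fund0, pot_coef.
  cbn [An mmul Acoc m11 m12 m21 m22]. rewrite pot_shift. ring.
Qed.

Lemma fund1_0 : fund1 0 = 0. Proof. reflexivity. Qed.
Lemma fund1_1 : fund1 1 = 1. Proof. unfold fund1; simpl; ring. Qed.
Lemma fund0_0 : fund0 0 = 1. Proof. reflexivity. Qed.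
Lemma fund0_1 : fund0 1 = 0. Proof. unfold fund0; simpl; ring. Qed.

Lemma Pk_gram k :
  Pk v alpha x E k =
  M2 (gram fund1 fund1 (2 * k)) (gram fund1 fund0 (2 * k))
     (gram fund1 fund0 (2 * k)) (gram fund0 fund0 (2 * k)).
Proof.
  induction k as [|k IH]; [reflexivity|].
  cbn [Pk]. rewrite IH.
  replace (2 * k + 1)%nat with (S (2 * k)) by lia.
  replace (2 * S k)%nat with (S (S (2 * k))) by lia.
  unfold gram, madd, mmul, madj. cbn [fsum m11 m12 m21 m22].
  rewrite <- fund1_S, <- fund0_S.
  change (m21 (An v alpha E (S (2 * k)) (x + alpha))) with (fund1 (S (2 * k))).
  change (m22 (An v alpha E (S (2 * k)) (x + alpha))) with (fund0 (S (2 * k))).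
  f_equal; ring.
Qed.

End Cocycle.

Definition re_seq (u : Z -> C) (n : nat) : R := fst (u (Z.of_nat n)).
Definition im_seq (u : Z -> C) (n : nat) : R := snd (u (Z.of_nat n)).

Lemma solves_re_im v alpha x E eps u : solves v alpha x (E, eps) u ->
  rec_sol (pot_coef v alpha x E) (fun n => - eps * im_seq u (S n)) (re_seq u) /\
  rec_sol (pot_coef v alpha x E) (fun n => eps * re_seq u (S n)) (im_seq u).
Proof.
  intros Hsol. cut (forall n,
    re_seq u (S (S n)) = pot_coef v alpha x E n * re_seq u (S n) - re_seq u n
                         + - eps * im_seq u (S n) /\
    im_seq u (S (S n)) = pot_coef v alpha x E n * im_seq u (S n) - im_seq u n
                         + eps * re_seq u (S n)).
  { intros H; split; intros n; apply H. }
  intros n. pose proof (Hsol (Z.of_nat (S n))) as H.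
  replace (Z.of_nat (S n) + 1)%Z with (Z.of_nat (S (S n))) in H by lia.
  replace (Z.of_nat (S n) - 1)%Z with (Z.of_nat n) in H by lia.
  rewrite <- INR_IZR_INZ in H.
  unfold re_seq, im_seq, pot_coef.
  destruct (u (Z.of_nat (S (S n)))) as [a1 a2], (u (Z.of_nat n)) as [b1 b2],
    (u (Z.of_nat (S n))) as [c1 c2].
  simpl. injection H as Hr Hi. split; lra.
Qed.

Lemma Cmod_sq (z : C) : Cmod z ^ 2 = fst z ^ 2 + snd z ^ 2.
Proof. unfold Cmod. apply pow2_sqrt. nra. Qed.

Lemma l2_decay u : l2_at_plus_infty u ->
  is_lim_seq (fun n => re_seq u n ^ 2 + im_seq u n ^ 2) 0.
Proof.
  intros Hl2. apply (is_lim_seq_ext (fun n => Cmod (u (Z.of_nat n)) ^ 2)).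
  - intros n. apply Cmod_sq.
  - exact (ex_series_lim_0 _ Hl2).
Qed.

Lemma C_eq_0_of_sq_le (z : C) : fst z ^ 2 + snd z ^ 2 <= 0 -> z = 0%C.
Proof.
  intros H. apply Cmod_eq_0.
  pose proof (Cmod_sq z). pose proof (Cmod_ge_0 z). nra.
Qed.

Lemma solves_zero v alpha x z (u : Z -> C) : solves v alpha x z u ->
  u 1%Z = 0%C -> u 2%Z = 0%C -> forall n, u n = 0%C.
Proof.
  intros Hs H1 H2.
  assert (Q : forall n, u (n + 1)%Z = 0%C /\ u (n + 2)%Z = 0%C).
  { apply Z.peano_ind.
    - simpl; auto.
    - intros n [A B]. split.
      + replace (Z.succ n + 1)%Z with (n + 2)%Z by lia. exact B.
      + pose proof (Hs (n + 2)%Z) as H.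
        replace (n + 2 - 1)%Z with (n + 1)%Z in H by lia.
        replace (n + 2 + 1)%Z with (Z.succ n + 2)%Z in H by lia.
        rewrite A, B, Cmult_0_r, !Cplus_0_r, Cmult_0_r in H. exact H.
    - intros n [A B]. split.
      + pose proof (Hs (n + 1)%Z) as H.
        replace (n + 1 - 1)%Z with (Z.pred n + 1)%Z in H by lia.
        replace (n + 1 + 1)%Z with (n + 2)%Z in H by lia.
        rewrite A, B, Cmult_0_r, Cmult_0_r, Cplus_0_l, Cplus_0_r in H. exact H.
      + replace (Z.pred n + 2)%Z with (n + 1)%Z by lia. exact A. }
  intros n. destruct (Q (n - 1)%Z) as [A _]. replace (n - 1 + 1)%Z with n in A by lia. exact A.
Qed.

Lemma mass_pos v alpha x z u N : solves v alpha x z u -> nonzero_seq u -> (2 <= N)%nat ->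
  0 < mass (re_seq u) (im_seq u) N.
Proof.
  intros Hsol [n Hn] HN. apply Rnot_le_lt; intros Hle. apply Hn.
  set (f j := re_seq u (S j) ^ 2 + im_seq u (S j) ^ 2).
  assert (Hf : forall j, 0 <= f j) by (intros; unfold f; nra).
  pose proof (fsum_ge_term f N 0 Hf ltac:(lia)) as T0.
  pose proof (fsum_ge_term f N 1 Hf ltac:(lia)) as T1.
  apply (solves_zero v alpha x z u Hsol); apply C_eq_0_of_sq_le.
  - change (f 0%nat <= 0). unfold mass in Hle. fold f in Hle. lra.
  - change (f 1%nat <= 0). unfold mass in Hle. fold f in Hle. lra.
Qed.

Lemma Lub_Rbar_finite (Es : R -> Prop) M r0 : (forall r, Es r -> r <= M) -> Es r0 ->
  exists l, Lub_Rbar Es = Finite l /\ r0 <= l /\ l <= M.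
Proof.
  intros HM H0. destruct (Lub_Rbar_correct Es) as [Hub Hleast].
  specialize (Hleast (Finite M) (fun r Hr => HM r Hr)). specialize (Hub _ H0).
  destruct (Lub_Rbar Es) as [l| |]; simpl in *; try contradiction.
  exists l; auto.
Qed.

Lemma opnorm_sym_bounds A C B : 0 < A -> 0 < B -> C ^ 2 <= A * B ->
  exists o, opnorm (M2 A C C B) = Finite o /\ (A + B) / 2 <= o /\ o <= A + B.
Proof.
  intros HA HB HC. unfold opnorm; cbn [m11 m12 m21 m22].
  set (Es := fun r => exists w1 w2 : R, w1 ^ 2 + w2 ^ 2 = 1 /\
    r = sqrt ((A * w1 + C * w2) ^ 2 + (C * w1 + B * w2) ^ 2)).
  assert (Hup : forall r, Es r -> r <= A + B).
  { intros r (w1 & w2 & Hw & ->).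
    rewrite <- (sqrt_pow2 (A + B)) by lra. apply sqrt_le_1_alt.
    assert (E1 : (A ^ 2 + C ^ 2) * (w1 ^ 2 + w2 ^ 2) = A ^ 2 + C ^ 2) by (rewrite Hw; ring).
    assert (E2 : (C ^ 2 + B ^ 2) * (w1 ^ 2 + w2 ^ 2) = C ^ 2 + B ^ 2) by (rewrite Hw; ring).
    pose proof (pow2_ge_0 (A * w2 - C * w1)). pose proof (pow2_ge_0 (C * w2 - B * w1)).
    lra. }
  (* the norm is at least the larger diagonal entry, hence at least [tr / 2] *)
  assert (Hdiag : forall d, 0 < d -> d <= sqrt (d ^ 2 + C ^ 2)).
  { intros d Hd. rewrite <- (sqrt_pow2 d) at 1 by lra.
    apply sqrt_le_1_alt. pose proof (pow2_ge_0 C). lra. }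
  destruct (Rle_dec B A).
  - destruct (Lub_Rbar_finite Es _ (sqrt (A ^ 2 + C ^ 2)) Hup) as (o & Ho & H1 & H2).
    { exists 1, 0. split; [ring|]. f_equal. ring. }
    exists o. specialize (Hdiag A HA). repeat split; auto; lra.
  - destruct (Lub_Rbar_finite Es _ (sqrt (B ^ 2 + C ^ 2)) Hup) as (o & Ho & H1 & H2).
    { exists 0, 1. split; [ring|]. f_equal. ring. }
    exists o. specialize (Hdiag B HB). repeat split; auto; lra.
Qed.

Lemma z_beta_Cmod mx my beta : 0 < my ->
  Cmod (z_beta (mx, my) beta) =
  sqrt ((cos beta * mx + sin beta) ^ 2 + (cos beta * my) ^ 2)
  / sqrt ((- sin beta * mx + cos beta) ^ 2 + (sin beta * my) ^ 2).
Proof.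
  intros Hmy. unfold z_beta, mobius, Rot. cbn [m11 m12 m21 m22].
  replace (2 * PI * (- beta / (2 * PI))) with (- beta) by (field; apply PI_neq0).
  rewrite cos_neg, sin_neg, Ropp_involutive.
  pose proof (sin2_cos2 beta) as cs. unfold Rsqr in cs.
  rewrite Cmod_div.
  - unfold Cmod. cbn. f_equal; f_equal; ring.
  - intros H. injection H as H1 H2.
    assert (Hs : sin beta = 0) by (apply (Rmult_eq_reg_r my); lra).
    rewrite Hs in H1, cs. assert (cos beta = 0) by lra. nra.
Qed.

(* [Cmod z_beta] is a ratio of two quantities whose sum is [1 + |z|^2] and whose
   product is at least [(Im z)^2] *)
Lemma z_beta_Cmod_le mx my beta : 0 < my ->
  Cmod (z_beta (mx, my) beta) <= (1 + mx ^ 2 + my ^ 2) / my.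
Proof.
  intros Hmy. rewrite z_beta_Cmod by exact Hmy.
  set (F := (1 + mx ^ 2 + my ^ 2) / my).
  assert (HF : F * my = 1 + mx ^ 2 + my ^ 2) by (unfold F; field; lra).
  assert (HF0 : 0 < F) by (apply (Rmult_lt_reg_r my); nra).
  set (c := cos beta). set (s := sin beta).
  pose proof (sin2_cos2 beta) as cs. fold c s in cs. unfold Rsqr in cs.
  set (Na := (c * mx + s) ^ 2 + (c * my) ^ 2).
  set (Nb := (- s * mx + c) ^ 2 + (s * my) ^ 2).
  assert (Hsum : Na + Nb = 1 + mx ^ 2 + my ^ 2).
  { transitivity ((s * s + c * c) * (1 + mx ^ 2 + my ^ 2)); [unfold Na, Nb; ring | rewrite cs; ring]. }
  assert (Hprod : my ^ 2 <= Na * Nb).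
  { replace (Na * Nb) with (((c * mx + s) * (- s * mx + c) - c * s * my ^ 2) ^ 2
                            + my ^ 2 * (s * s + c * c) ^ 2) by (unfold Na, Nb; ring).
    rewrite cs. pose proof (pow2_ge_0 ((c * mx + s) * (- s * mx + c) - c * s * my ^ 2)). lra. }
  assert (HNa : 0 <= Na)
    by (unfold Na; pose proof (pow2_ge_0 (c * mx + s)); pose proof (pow2_ge_0 (c * my)); lra).
  assert (HNb : 0 <= Nb)
    by (unfold Nb; pose proof (pow2_ge_0 (- s * mx + c)); pose proof (pow2_ge_0 (s * my)); lra).
  assert (HNb0 : 0 < Nb).
  { destruct HNb as [h|h]; [exact h|]. rewrite <- h, Rmult_0_r in Hprod.
    pose proof (pow_lt my 2 Hmy). lra. }
  assert (Key : Na <= F ^ 2 * Nb).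
  { apply (Rmult_le_reg_r (my ^ 2)); [nra|].
    replace (F ^ 2 * Nb * my ^ 2) with ((F * my) ^ 2 * Nb) by ring.
    rewrite HF, <- Hsum.
    apply Rle_trans with (Na * (Na * Nb)); [apply Rmult_le_compat_l; auto|]. nra. }
  apply (Rmult_le_reg_r (sqrt Nb)); [apply sqrt_lt_R0; exact HNb0|].
  unfold Rdiv. rewrite Rmult_assoc, Rinv_l, Rmult_1_r by (apply Rgt_not_eq, sqrt_lt_R0; lra).
  rewrite <- (sqrt_pow2 F), <- sqrt_mult by (try apply pow2_ge_0; lra).
  apply sqrt_le_1_alt. exact Key.
Qed.

Lemma z_beta_Cmod_0 mx my : 0 < my -> my <= Cmod (z_beta (mx, my) 0).
Proof.
  intros Hmy. rewrite z_beta_Cmod, cos_0, sin_0 by exact Hmy.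
  replace ((- 0 * mx + 1) ^ 2 + (0 * my) ^ 2) with 1 by ring. rewrite sqrt_1, Rdiv_1_r.
  rewrite <- (sqrt_pow2 my) at 1 by lra. apply sqrt_le_1_alt. nra.
Qed.

(* at this angle the real part [- sin beta * mx + cos beta] of the denominator vanishes *)
Lemma z_beta_Cmod_atan mx my : 0 < my ->
  (1 + mx ^ 2) / my <= Cmod (z_beta (mx, my) (PI / 2 - atan mx)).
Proof.
  intros Hmy. rewrite z_beta_Cmod by exact Hmy.
  rewrite cos_shift, sin_shift, sin_atan, cos_atan.
  set (r := sqrt (1 + mx²)).
  assert (Hr2 : r * r = 1 + mx ^ 2)
    by (unfold r; rewrite sqrt_sqrt; unfold Rsqr; [ring | pose proof (pow2_ge_0 mx); nra]).
  assert (Hr : 0 < r) by (apply sqrt_lt_R0; unfold Rsqr; pose proof (pow2_ge_0 mx); nra).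
  assert (Hq : mx / r * mx + 1 / r = r).
  { replace (mx / r * mx + 1 / r) with ((1 + mx ^ 2) / r) by (field; lra).
    rewrite <- Hr2. field. lra. }
  rewrite Hq.
  replace ((mx / r * my) ^ 2) with ((mx * my / r) ^ 2) by (field; lra).
  replace ((- (1 / r) * mx + mx / r) ^ 2 + (1 / r * my) ^ 2) with ((my / r) ^ 2) by (field; lra).
  rewrite sqrt_pow2 by (apply Rlt_le, Rdiv_lt_0_compat; lra).
  assert (r <= sqrt (r ^ 2 + (mx * my / r) ^ 2)).
  { rewrite <- (sqrt_pow2 r) at 1 by lra. apply sqrt_le_1_alt. nra. }
  rewrite <- Hr2. replace (r * r / my) with (r / (my / r)) by (field; lra).
  apply Rmult_le_compat_r; [apply Rlt_le, Rinv_0_lt_compat, Rdiv_lt_0_compat|]; lra.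
Qed.

Lemma psi_bounds mx my : 0 < my ->
  exists ps, psi (mx, my) = Finite ps /\
    (1 + mx ^ 2 + my ^ 2) / my / 2 <= ps /\ ps <= (1 + mx ^ 2 + my ^ 2) / my.
Proof.
  intros Hmy.
  assert (Hup : forall r, (exists beta, r = Cmod (z_beta (mx, my) beta)) ->
                          r <= (1 + mx ^ 2 + my ^ 2) / my)
    by (intros r [beta ->]; apply z_beta_Cmod_le, Hmy).
  (* the witness [beta = 0] is good when [Im z] dominates, the other one otherwise *)
  destruct (Rle_dec (1 + mx ^ 2) (my ^ 2)).
  - destruct (Lub_Rbar_finite _ _ _ Hup (ex_intro _ 0 eq_refl)) as (ps & Hps & H1 & H2).
    exists ps. pose proof (z_beta_Cmod_0 mx my Hmy).
    assert ((1 + mx ^ 2 + my ^ 2) / my <= 2 * my)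
      by (apply (Rmult_le_reg_r my); [lra|]; unfold Rdiv; field_simplify; lra).
    repeat split; auto; lra.
  - destruct (Lub_Rbar_finite _ _ _ Hup (ex_intro _ (PI / 2 - atan mx) eq_refl))
      as (ps & Hps & H1 & H2).
    exists ps. pose proof (z_beta_Cmod_atan mx my Hmy).
    assert ((1 + mx ^ 2 + my ^ 2) / my <= 2 * ((1 + mx ^ 2) / my))
      by (apply (Rmult_le_reg_r my); [lra|]; unfold Rdiv; field_simplify; lra).
    repeat split; auto; lra.
Qed.

Lemma m_of_eq (u : Z -> C) :
  0 < fst (u 0%Z) ^ 2 + snd (u 0%Z) ^ 2 ->
  m_of u =
  (- (fst (u 1%Z) * fst (u 0%Z) + snd (u 1%Z) * snd (u 0%Z)) / (fst (u 0%Z) ^ 2 + snd (u 0%Z) ^ 2),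
   (fst (u 1%Z) * snd (u 0%Z) - snd (u 1%Z) * fst (u 0%Z)) / (fst (u 0%Z) ^ 2 + snd (u 0%Z) ^ 2)).
Proof.
  intros H. unfold m_of.
  destruct (u 1%Z) as [p1 q1], (u 0%Z) as [p0 q0]. cbn [fst snd] in *.
  unfold Cdiv, Cinv, Cmult, Copp. cbn [fst snd]. f_equal; field; lra.
Qed.

(* [psi(m)] is comparable to [(1 + |m|^2) / Im m = (|u_0|^2 + |u_1|^2) / Im(u_0 conj u_1)] *)
Lemma psi_m_of_bounds (u : Z -> C) :
  let p1 := fst (u 1%Z) in let q1 := snd (u 1%Z) in
  let p0 := fst (u 0%Z) in let q0 := snd (u 0%Z) in
  0 < p1 * q0 - q1 * p0 ->
  exists ps, psi (m_of u) = Finite ps /\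
    (p1 ^ 2 + q1 ^ 2 + p0 ^ 2 + q0 ^ 2) / (p1 * q0 - q1 * p0) / 2 <= ps /\
    ps <= (p1 ^ 2 + q1 ^ 2 + p0 ^ 2 + q0 ^ 2) / (p1 * q0 - q1 * p0).
Proof.
  intros p1 q1 p0 q0 Ht.
  assert (Hn0 : 0 < p0 ^ 2 + q0 ^ 2).
  { apply Rnot_le_lt; intros h.
    assert (p0 = 0) by nra. assert (q0 = 0) by nra. nra. }
  rewrite (m_of_eq u Hn0). fold p1 q1 p0 q0.
  destruct (psi_bounds (- (p1 * p0 + q1 * q0) / (p0 ^ 2 + q0 ^ 2))
                       ((p1 * q0 - q1 * p0) / (p0 ^ 2 + q0 ^ 2)))
    as (ps & Hps & H1 & H2); [apply Rdiv_lt_0_compat; lra|].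
  exists ps. replace ((p1 ^ 2 + q1 ^ 2 + p0 ^ 2 + q0 ^ 2) / (p1 * q0 - q1 * p0))
    with ((1 + (- (p1 * p0 + q1 * q0) / (p0 ^ 2 + q0 ^ 2)) ^ 2
           + ((p1 * q0 - q1 * p0) / (p0 ^ 2 + q0 ^ 2)) ^ 2)
          / ((p1 * q0 - q1 * p0) / (p0 ^ 2 + q0 ^ 2)))
    by (field; lra).
  auto.
Qed.

(* Cayley-Hamilton: [tr P * <P w, w> - det P * |w|^2 = |P w|^2] *)
Lemma qform_trace_ge A B C x y :
  (A * B - C ^ 2) * (x ^ 2 + y ^ 2) <= (A + B) * qform A B C x y.
Proof.
  unfold qform. pose proof (pow2_ge_0 (A * x + C * y)). pose proof (pow2_ge_0 (C * x + B * y)).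
  nra.
Qed.

Lemma qform_add_adj A B C x y :
  qform A B C x y + qform B A (- C) x y = (A + B) * (x ^ 2 + y ^ 2).
Proof. unfold qform. ring. Qed.

Lemma qform_nonneg A B C x y : 0 < A -> 0 <= A * B - C ^ 2 -> 0 <= qform A B C x y.
Proof.
  intros HA HD. apply (Rmult_le_reg_l A); [exact HA|].
  replace (A * qform A B C x y) with ((A * x + C * y) ^ 2 + (A * B - C ^ 2) * y ^ 2)
    by (unfold qform; ring).
  rewrite Rmult_0_r. pose proof (pow2_ge_0 (A * x + C * y)). pose proof (pow2_ge_0 y). nra.
Qed.

(* with [P = [[A, C], [C, B]]] and [adj P = tr P - P]: the area spanned by two
   vectors is controlled by their [P]- and [adj P]-norms *)
Lemma trace_area_sq_le A B C p1 p0 q1 q0 :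
  0 < A -> 0 < B -> 0 <= A * B - C ^ 2 ->
  ((A + B) * (p1 * q0 - q1 * p0)) ^ 2 <=
  2 * ((qform A B C p1 p0 + qform A B C q1 q0) *
       (qform B A (- C) p1 p0 + qform B A (- C) q1 q0)).
Proof.
  intros HA HB HD.
  set (X := (A * p1 + C * p0) * (- q0) + (C * p1 + B * p0) * q1).
  set (Y := (- p0) * (A * q1 + C * q0) + p1 * (C * q1 + B * q0)).
  assert (HX : X ^ 2 <= qform A B C p1 p0 * qform B A (- C) q1 q0).
  { replace (qform A B C p1 p0 * qform B A (- C) q1 q0)
      with (X ^ 2 + (A * B - C ^ 2) * (p1 * q1 + p0 * q0) ^ 2) by (unfold X, qform; ring).
    pose proof (pow2_ge_0 (p1 * q1 + p0 * q0)). nra. }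
  assert (HY : Y ^ 2 <= qform B A (- C) p1 p0 * qform A B C q1 q0).
  { replace (qform B A (- C) p1 p0 * qform A B C q1 q0)
      with (Y ^ 2 + (A * B - C ^ 2) * (p0 * q0 + p1 * q1) ^ 2) by (unfold Y, qform; ring).
    pose proof (pow2_ge_0 (p0 * q0 + p1 * q1)). nra. }
  assert (HD' : 0 <= B * A - (- C) ^ 2) by lra.
  pose proof (qform_nonneg A B C p1 p0 HA HD). pose proof (qform_nonneg A B C q1 q0 HA HD).
  pose proof (qform_nonneg B A (- C) p1 p0 HB HD'). pose proof (qform_nonneg B A (- C) q1 q0 HB HD').
  replace (((A + B) * (p1 * q0 - q1 * p0)) ^ 2) with ((X - Y) ^ 2) by (unfold X, Y; ring).
  pose proof (pow2_ge_0 (X + Y)). nra.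
Qed.

Lemma weyl_ratio_le A B C eps p1 p0 q1 q0 :
  0 <= A + B -> 0 < eps -> (A * B - C ^ 2) * (4 * eps ^ 2) = 1 -> 0 < p1 * q0 - q1 * p0 ->
  eps * (qform A B C p1 p0 + qform A B C q1 q0) <= 3 * (p1 * q0 - q1 * p0) ->
  (p1 ^ 2 + q1 ^ 2 + p0 ^ 2 + q0 ^ 2) / (p1 * q0 - q1 * p0) <= 12 * (eps * (A + B)).
Proof.
  intros HAB Heps HD Ht Hff.
  set (t := p1 * q0 - q1 * p0) in *.
  set (ff := qform A B C p1 p0 + qform A B C q1 q0) in *.
  set (W := p1 ^ 2 + q1 ^ 2 + p0 ^ 2 + q0 ^ 2).
  assert (HDW : (A * B - C ^ 2) * W <= (A + B) * ff).
  { pose proof (qform_trace_ge A B C p1 p0). pose proof (qform_trace_ge A B C q1 q0).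
    unfold W, ff. lra. }
  apply (Rmult_le_reg_r t); [exact Ht|]. unfold Rdiv.
  rewrite Rmult_assoc, Rinv_l, Rmult_1_r by lra.
  replace W with ((A * B - C ^ 2) * W * (4 * eps ^ 2))
    by (transitivity (W * ((A * B - C ^ 2) * (4 * eps ^ 2))); [ring | rewrite HD; ring]).
  apply Rle_trans with ((A + B) * ff * (4 * eps ^ 2)).
  - apply Rmult_le_compat_r; [nra | exact HDW].
  - replace ((A + B) * ff * (4 * eps ^ 2)) with (4 * eps * (A + B) * (eps * ff)) by ring.
    replace (12 * (eps * (A + B)) * t) with (4 * eps * (A + B) * (3 * t)) by ring.
    apply Rmult_le_compat_l; [nra | exact Hff].
Qed.

Lemma weyl_ratio_ge A B C eps p1 p0 q1 q0 :
  0 < A -> 0 < B -> 0 <= A * B - C ^ 2 -> 0 < eps -> 0 < p1 * q0 - q1 * p0 ->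
  eps * (qform A B C p1 p0 + qform A B C q1 q0) <= 3 * (p1 * q0 - q1 * p0) ->
  eps * (A + B) <= 6 * ((p1 ^ 2 + q1 ^ 2 + p0 ^ 2 + q0 ^ 2) / (p1 * q0 - q1 * p0)).
Proof.
  intros HA HB HD Heps Ht Hff.
  pose proof (trace_area_sq_le A B C p1 p0 q1 q0 HA HB HD) as Harea.
  set (t := p1 * q0 - q1 * p0) in *.
  set (ff := qform A B C p1 p0 + qform A B C q1 q0) in *.
  set (W := p1 ^ 2 + q1 ^ 2 + p0 ^ 2 + q0 ^ 2).
  assert (Hff0 : 0 <= ff)
    by (unfold ff; pose proof (qform_nonneg A B C p1 p0 HA HD);
        pose proof (qform_nonneg A B C q1 q0 HA HD); lra).
  assert (HW : 0 <= W) by (unfold W; nra).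
  assert (Hadj : qform B A (- C) p1 p0 + qform B A (- C) q1 q0 <= (A + B) * W).
  { pose proof (qform_add_adj A B C p1 p0). pose proof (qform_add_adj A B C q1 q0).
    unfold W, ff in *. lra. }
  assert (Ht2 : (A + B) * t ^ 2 <= 2 * ff * W).
  { apply (Rmult_le_reg_l (A + B)); [lra|].
    replace ((A + B) * ((A + B) * t ^ 2)) with (((A + B) * t) ^ 2) by ring.
    apply Rle_trans with (2 * (ff * ((A + B) * W))); [|nra].
    apply Rle_trans with (1 := Harea). apply Rmult_le_compat_l; [lra|].
    apply Rmult_le_compat_l; [exact Hff0 | exact Hadj]. }
  apply (Rmult_le_reg_r (t * t)); [nra|].
  replace (6 * (W / t) * (t * t)) with (2 * W * (3 * t)) by (field; lra).
  apply Rle_trans with (2 * W * (eps * ff)); [|apply Rmult_le_compat_l; lra].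
  replace (eps * (A + B) * (t * t)) with (eps * ((A + B) * t ^ 2)) by ring.
  replace (2 * W * (eps * ff)) with (eps * (2 * ff * W)) by ring.
  apply Rmult_le_compat_l; lra.
Qed.

Lemma gram_pos_of_det_pos a b N : 0 < gram_det a b N -> 0 < gram a a N /\ 0 < gram b b N.
Proof.
  unfold gram_det. intros HD.
  assert (HA : 0 <= gram a a N) by (apply fsum_nonneg; intros; nra).
  assert (HB : 0 <= gram b b N) by (apply fsum_nonneg; intros; nra).
  pose proof (pow2_ge_0 (gram a b N)). split; nra.
Qed.

Section WeylSolution.
Variables (v : R -> R) (alpha x E eps : R) (N : nat) (u : Z -> C).
Hypotheses (HN : (2 <= N)%nat) (Heps : 0 < eps)
  (Hdet : gram_det (fund1 v alpha x E) (fund0 v alpha x E) N * (4 * eps ^ 2) = 1)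
  (Hsol : solves v alpha x (E, eps) u) (Hnz : nonzero_seq u) (Hl2 : l2_at_plus_infty u).

Local Notation p := (re_seq u).
Local Notation q := (im_seq u).

Lemma weyl_mass_le : eps * mass p q N <= p 1%nat * q 0%nat - q 1%nat * p 0%nat.
Proof.
  destruct (solves_re_im v alpha x E eps u Hsol) as [Hp Hq].
  apply (mass_le_wronskian (pot_coef v alpha x E) eps p q Hp Hq); [lra | exact (l2_decay u Hl2)].
Qed.

Lemma weyl_wronskian_pos : 0 < p 1%nat * q 0%nat - q 1%nat * p 0%nat.
Proof.
  pose proof (mass_pos v alpha x (E, eps) u N Hsol Hnz HN). pose proof weyl_mass_le. nra.
Qed.

(* with [det P = 1 / (4 eps^2)] the deviation of [u] from the free solution
   costs at most half the mass of [u] *)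
Lemma weyl_free_mass_le :
  let A := gram (fund1 v alpha x E) (fund1 v alpha x E) N in
  let B := gram (fund0 v alpha x E) (fund0 v alpha x E) N in
  let C := gram (fund1 v alpha x E) (fund0 v alpha x E) N in
  eps * (qform A B C (p 1%nat) (p 0%nat) + qform A B C (q 1%nat) (q 0%nat))
  <= 3 * (p 1%nat * q 0%nat - q 1%nat * p 0%nat).
Proof.
  cbv zeta.
  destruct (solves_re_im v alpha x E eps u Hsol) as [Hp Hq].
  pose proof (free_mass_le (pot_coef v alpha x E) _ _ (fund1_rec v alpha x E) (fund0_rec v alpha x E)
    (fund1_0 v alpha x E) (fund1_1 v alpha x E) (fund0_0 v alpha x E) (fund0_1 v alpha x E)
    eps p q Hp Hq N) as Hfree.
  replace (2 * (1 + 2 * eps ^ 2 * gram_det (fund1 v alpha x E) (fund0 v alpha x E) N))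
    with (2 + gram_det (fund1 v alpha x E) (fund0 v alpha x E) N * (4 * eps ^ 2)) in Hfree
    by ring.
  rewrite Hdet in Hfree.
  pose proof weyl_mass_le.
  apply Rle_trans with (3 * (eps * mass p q N)); [|lra].
  replace (3 * (eps * mass p q N)) with (eps * (3 * mass p q N)) by ring.
  apply Rmult_le_compat_l; lra.
Qed.

End WeylSolution.

Theorem lemma4p2 :
  forall alpha : R, irrational alpha ->
  exists Cst : R, 0 < Cst /\
  forall (v : R -> R), one_periodic v -> real_analytic v ->
  forall (x E : R) (k : nat), (1 <= k)%nat ->
  forall eps : R, 0 < eps ->
  mdet (Pk v alpha x E k) = 1 / (4 * eps ^ 2) ->
  forall u : Z -> C,
    solves v alpha x (E, eps) u -> nonzero_seq u -> l2_at_plus_infty u ->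
    Rbar_lt (Rbar_mult (/ Cst * (2 * eps)) (opnorm (Pk v alpha x E k)))
            (psi (m_of u)) /\
    Rbar_lt (psi (m_of u))
            (Rbar_mult (Cst * (2 * eps)) (opnorm (Pk v alpha x E k))).
Proof.
  (* the ratio lies in [[1/24, 12]] *)
  intros alpha _. exists 25. split; [lra|].
  intros v _ _ x E k Hk eps Heps Hdet u Hsol Hnz Hl2.
  rewrite Pk_gram in Hdet |- *. unfold mdet in Hdet; cbn [m11 m12 m21 m22] in Hdet.
  assert (HN : (2 <= 2 * k)%nat) by lia.
  assert (HD : gram_det (fund1 v alpha x E) (fund0 v alpha x E) (2 * k) * (4 * eps ^ 2) = 1)
    by (unfold gram_det; rewrite <- Rsqr_pow2; unfold Rsqr; rewrite Hdet; field; lra).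
  pose proof (weyl_wronskian_pos v alpha x E eps _ u HN Heps Hsol Hnz Hl2) as Ht.
  pose proof (weyl_free_mass_le v alpha x E eps _ u Heps HD Hsol Hl2) as Hff.
  destruct (gram_pos_of_det_pos (fund1 v alpha x E) (fund0 v alpha x E) (2 * k))
    as [HA HB]; [nra|].
  unfold gram_det in HD.
  set (A := gram (fund1 v alpha x E) (fund1 v alpha x E) (2 * k)) in *.
  set (B := gram (fund0 v alpha x E) (fund0 v alpha x E) (2 * k)) in *.
  set (C := gram (fund1 v alpha x E) (fund0 v alpha x E) (2 * k)) in *.
  cbv zeta in Hff. unfold re_seq, im_seq in Ht, Hff. simpl Z.of_nat in Ht, Hff.
  destruct (psi_m_of_bounds u Ht) as (ps & -> & Hps1 & Hps2).
  destruct (opnorm_sym_bounds A C B HA HB ltac:(nra)) as (o & -> & Ho1 & Ho2).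
  pose proof (weyl_ratio_le A B C eps _ _ _ _ ltac:(lra) Heps HD Ht Hff).
  pose proof (weyl_ratio_ge A B C eps _ _ _ _ HA HB ltac:(nra) Heps Ht Hff).
  cbn [Rbar_mult Rbar_mult' Rbar_lt].
  assert (0 < eps * (A + B)) by nra.
  assert (eps * (A + B) / 2 <= eps * o <= eps * (A + B)) by (split; nra).
  split; lra.
Qed.
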